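(* Let $(X,d)$ be a complete metric space and $\mathcal S$ a semigroup acting on $X$. Assume there exists $k<\kappa(X)$ such that for all $(x,y)\in X\times X$ with $D(x,o(y))\le D(x,o(x))$ and for all $s\in\mathcal S$, $$\inf_{t\in\mathcal S^1} D(sx,o(tsy))\le k\,D(x,o(y)).$$ Then either all the orbits are unbounded or there exists $x\in X$ such that $sx=x$ for all $s\in\mathcal S$.
   Context: A semigroup action is a map $\mathcal S\times X\to X$, $(s,x)\mapsto sx$, with $(st)x=s(tx)$. $\mathcal S^1$ denotes $\mathcal S$ with an identity $1$ adjoined (acting as the identity map; $\mathcal S^1=\mathcal S$ if $\mathcal S$ already has an identity). The orbit of $x$ is $o(x)=\{x\}\cup\{sx:s\in\mathcal S\}$; for nonempty $C\subseteq X$, $D(x,C)=\sup\{d(x,y):y\in C\}$. $B(x,r)$ denotes the closed ball. For $c\ge1$, balls in $X$ are $c$-regular if for every $k'<c$ there are $\mu,\alpha\in(0,1)$ such that for all $x,y\in X$ and $r>0$ with $d(x,y)\ge(1-\mu)r$ there exists $z\in X$ with $B(x,(1+\mu)r)\cap B(y,k'(1+\mu)r)\subseteq B(z,\alpha r)$. The Lifschitz characteristic is $\kappa(X)=\sup\{c\ge1:\text{balls in }X\text{ are }c\text{-regular}\}$. *)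

From Stdlib Require Import Reals.
From Coquelicot Require Import Rbar Lub.
Open Scope R_scope.

Record is_metric {X : Type} (d : X -> X -> R) : Prop := {
  metric_nonneg : forall x y, 0 <= d x y;
  metric_eq0 : forall x y, d x y = 0 <-> x = y;
  metric_sym : forall x y, d x y = d y x;
  metric_triangle : forall x y z, d x z <= d x y + d y z }.

Definition cauchy_seq {X : Type} (d : X -> X -> R) (u : nat -> X) : Prop :=
  forall eps, 0 < eps -> exists N, forall m n, (N <= m)%nat -> (N <= n)%nat ->
    d (u m) (u n) < eps.

Definition seq_converges_to {X : Type} (d : X -> X -> R) (u : nat -> X) (l : X) : Prop :=
  forall eps, 0 < eps -> exists N, forall n, (N <= n)%nat -> d (u n) l < eps.

Definition complete_metric {X : Type} (d : X -> X -> R) : Prop :=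
  forall u : nat -> X, cauchy_seq d u -> exists l, seq_converges_to d u l.

Definition cball {X : Type} (d : X -> X -> R) (x : X) (r : R) : X -> Prop :=
  fun w => d x w <= r.

Definition c_regular {X : Type} (d : X -> X -> R) (c : R) : Prop :=
  forall k', k' < c ->
    exists mu alpha, 0 < mu < 1 /\ 0 < alpha < 1 /\
      forall x y r, 0 < r -> (1 - mu) * r <= d x y ->
        exists z, forall w,
          cball d x ((1 + mu) * r) w -> cball d y (k' * ((1 + mu) * r)) w ->
          cball d z (alpha * r) w.

Definition lifschitz_char {X : Type} (d : X -> X -> R) : Rbar :=
  Rbar_lub (fun v => exists c, v = Finite c /\ 1 <= c /\ c_regular d c).

Definition semigroup_action {S X : Type} (mul : S -> S -> S) (act : S -> X -> X) : Prop :=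
  (forall s t u, mul (mul s t) u = mul s (mul t u)) /\
  (forall s t x, act (mul s t) x = act s (act t x)).

Definition orbit {S X : Type} (act : S -> X -> X) (x : X) : X -> Prop :=
  fun y => y = x \/ exists s, y = act s x.

Definition Dsup {X : Type} (d : X -> X -> R) (x : X) (C : X -> Prop) : Rbar :=
  Rbar_lub (fun v => exists y, C y /\ v = Finite (d x y)).

Definition has_identity {S : Type} (mul : S -> S -> S) : Prop :=
  exists e, forall s, mul e s = s /\ mul s e = s.

(* The maps x |-> t x for t ∈ S^1: S^1 = S if S has an identity,
   otherwise S with an adjoined identity acting as the identity map. *)
Definition S1_map {S X : Type} (mul : S -> S -> S) (act : S -> X -> X) (f : X -> X) : Prop :=
  (exists t, f = act t) \/ (~ has_identity mul /\ f = (fun x => x)).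

Definition bounded_set {X : Type} (d : X -> X -> R) (C : X -> Prop) : Prop :=
  exists c M, forall y, C y -> d c y <= M.

From Stdlib Require Import Reals Lra Lia Classical ClassicalEpsilon.
From Coquelicot Require Import Rbar Lub.
Open Scope R_scope.

(* If some orbit is bounded, there is a pair (x, y) with D(x, o(y)) <= r for
   some r > 0.  When some s moves x by at least (1 - mu) r, the hypothesis
   yields y' in o(y) whose orbit lies within r of x and within
   k' (1 + mu) r of s x, so by regularity of balls it lies in a ball of radius
   alpha r around a point z with d(x, z) <= 2 r; when no such s exists, o(x)
   itself lies within (1 - mu) r of x.  Either way the radius shrinks by a
   fixed factor q < 1 while the centre moves by at most 2 r, so the centres
   converge to some l.  Orbits then come arbitrarily close to l, and the
   hypothesis gives d(l, s l) <= (1 + max k 0) D(l, o(y)), whence s l = l. *)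

Lemma Rbar_lub_correct (E : Rbar -> Prop) : Rbar_is_lub E (Rbar_lub E).
Proof. exact (proj2_sig (Rbar_ex_lub E)). Qed.

Lemma Rbar_glb_correct (E : Rbar -> Prop) : Rbar_is_glb E (Rbar_glb E).
Proof. exact (proj2_sig (Rbar_ex_glb E)). Qed.

Lemma Rbar_lub_gt_elem (E : Rbar -> Prop) (a : R) :
  Rbar_lt a (Rbar_lub E) -> exists v, E v /\ Rbar_lt a v.
Proof.
  intros Hlt. apply NNPP. intros Hnone.
  apply (Rbar_lt_not_le _ _ Hlt), Rbar_lub_correct.
  intros v Ev. apply Rbar_not_lt_le. intros Hav. eauto.
Qed.

Lemma Rbar_glb_lt_elem (E : Rbar -> Prop) (b : R) :
  Rbar_lt (Rbar_glb E) b -> exists v, E v /\ Rbar_lt v b.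
Proof.
  intros Hlt. apply NNPP. intros Hnone.
  apply (Rbar_lt_not_le _ _ Hlt), Rbar_glb_correct.
  intros v Ev. apply Rbar_not_lt_le. intros Hvb. eauto.
Qed.

Lemma pow_eventually_lt (q eps : R) :
  0 <= q < 1 -> 0 < eps -> exists N, forall n, (N <= n)%nat -> q ^ n < eps.
Proof.
  intros Hq Heps.
  destruct (pow_lt_1_zero q ltac:(rewrite Rabs_right; lra) eps Heps) as [N HN].
  exists N. intros n Hn. specialize (HN n Hn).
  rewrite Rabs_right in HN; [exact HN | apply Rle_ge, pow_le; lra].
Qed.

Section Dsup.

Context {X : Type} (d : X -> X -> R).

Lemma Dsup_ge (x w : X) (C : X -> Prop) : C w -> Rbar_le (d x w) (Dsup d x C).
Proof. intros Cw. apply Rbar_lub_correct. eauto. Qed.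

Lemma Dsup_le_iff (x : X) (C : X -> Prop) (M : R) :
  Rbar_le (Dsup d x C) M <-> forall w, C w -> d x w <= M.
Proof.
  split.
  - intros HM w Cw. exact (Rbar_le_trans _ _ (Finite M) (Dsup_ge x w C Cw) HM).
  - intros HM. apply Rbar_lub_correct. intros v [w [Cw ->]]. exact (HM w Cw).
Qed.

Lemma Dsup_finite (x w0 : X) (C : X -> Prop) (M : R) :
  C w0 -> (forall w, C w -> d x w <= M) ->
  exists g, Dsup d x C = Finite g /\ d x w0 <= g <= M.
Proof.
  intros Cw0 HM.
  pose proof (Dsup_ge x w0 C Cw0) as Hlo.
  pose proof (proj2 (Dsup_le_iff x C M) HM) as Hhi.
  destruct (Dsup d x C) as [g | |]; simpl in *; try contradiction.
  exists g. auto.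
Qed.

End Dsup.

Lemma lifschitz_char_gt_regular {X : Type} (d : X -> X -> R) (k : R) :
  Rbar_lt k (lifschitz_char d) -> exists c, Rmax k 0 < c /\ c_regular d c.
Proof.
  intros Hk.
  destruct (Rbar_lub_gt_elem _ k Hk) as [v [[c [-> [Hc1 Hreg]]] Hkc]].
  simpl in Hkc. exists c. split; [apply Rmax_lub_lt; lra | exact Hreg].
Qed.

Section Descent.

Context {X : Type} (d : X -> X -> R).
Hypothesis Hd : is_metric d.

Lemma geometric_steps_tail (u : nat -> X) (C q : R) :
  q < 1 -> (forall n, d (u n) (u (S n)) <= C * q ^ n) ->
  forall n m, (1 - q) * d (u n) (u (n + m)%nat) <= C * (q ^ n - q ^ (n + m)).
Proof.
  intros Hq Hstep n m. induction m as [|m IH].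
  - rewrite Nat.add_0_r, (proj2 (metric_eq0 d Hd _ _) eq_refl). lra.
  - rewrite Nat.add_succ_r.
    pose proof (metric_triangle d Hd (u n) (u (n + m)%nat) (u (S (n + m)))) as Htri.
    pose proof (Hstep (n + m)%nat) as Hs.
    simpl pow.
    assert (Hmul : (1 - q) * d (u n) (u (S (n + m)))
                   <= (1 - q) * (d (u n) (u (n + m)%nat) + C * q ^ (n + m)))
      by (apply Rmult_le_compat_l; lra).
    nra.
Qed.

Lemma cauchy_of_geometric_steps (u : nat -> X) (C q : R) :
  0 <= q < 1 -> (forall n, d (u n) (u (S n)) <= C * q ^ n) -> cauchy_seq d u.
Proof.
  intros Hq Hstep eps Heps.
  assert (HC : 0 <= C).
  { pose proof (Hstep O) as H0. pose proof (metric_nonneg d Hd (u O) (u 1%nat)).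
    simpl in H0. lra. }
  destruct (pow_eventually_lt q (eps * (1 - q) / (C + 1)) Hq) as [N HN].
  { apply Rdiv_lt_0_compat; [apply Rmult_lt_0_compat|]; lra. }
  assert (Hfwd : forall n m, (N <= n)%nat -> (n <= m)%nat -> d (u n) (u m) < eps).
  { intros n m Hn Hnm. replace m with (n + (m - n))%nat by lia.
    pose proof (geometric_steps_tail u C q (proj2 Hq) Hstep n (m - n)) as Htail.
    pose proof (pow_le q (n + (m - n)) (proj1 Hq)).
    specialize (HN n Hn).
    assert (Hsmall : C * q ^ n < eps * (1 - q)).
    { apply (Rmult_lt_compat_r (C + 1)) in HN; [|lra].
      unfold Rdiv in HN. rewrite Rmult_assoc, Rinv_l in HN by lra.
      pose proof (pow_le q n (proj1 Hq)). nra. }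
    apply (Rmult_lt_reg_l (1 - q)); nra. }
  exists N. intros n m Hn Hm. destruct (Nat.le_ge_cases n m).
  - apply Hfwd; auto.
  - rewrite (metric_sym d Hd). apply Hfwd; auto.
Qed.

Variables (P : X -> R -> Prop) (q : R).
Hypothesis Hq : 0 < q < 1.
Hypothesis Hstep :
  forall x r, 0 < r -> P x r -> exists x', P x' (q * r) /\ d x x' <= 2 * r.

Lemma descent_limit (x0 : X) (r0 : R) :
  complete_metric d -> 0 < r0 -> P x0 r0 ->
  exists l, forall eps, 0 < eps -> exists x r, P x r /\ d x l + r < eps.
Proof.
  intros Hcomplete Hr0 HP0.
  set (next := fun x r => epsilon (inhabits x0)
                 (fun x' => P x' (q * r) /\ d x x' <= 2 * r)).
  assert (Hnext : forall x r, 0 < r -> P x r ->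
                    P (next x r) (q * r) /\ d x (next x r) <= 2 * r)
    by (intros x r Hr HP; exact (epsilon_spec _ _ (Hstep x r Hr HP))).
  set (u := nat_rect (fun _ => X) x0 (fun n x => next x (q ^ n * r0))).
  assert (Hpos : forall n, 0 < q ^ n * r0)
    by (intros n; apply Rmult_lt_0_compat; [apply pow_lt|]; lra).
  assert (Hinv : forall n, P (u n) (q ^ n * r0)).
  { induction n as [|n IH].
    - simpl. rewrite Rmult_1_l. exact HP0.
    - simpl pow. rewrite Rmult_assoc. exact (proj1 (Hnext _ _ (Hpos n) IH)). }
  assert (Hsteps : forall n, d (u n) (u (S n)) <= (2 * r0) * q ^ n).
  { intros n. pose proof (proj2 (Hnext _ _ (Hpos n) (Hinv n))). simpl. lra. }
  destruct (Hcomplete u (cauchy_of_geometric_steps u _ q ltac:(lra) Hsteps))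
    as [l Hl].
  exists l. intros eps Heps.
  destruct (Hl (eps / 2) ltac:(lra)) as [N1 HN1].
  destruct (pow_eventually_lt q (eps / (2 * r0)) ltac:(lra)) as [N2 HN2].
  { apply Rdiv_lt_0_compat; lra. }
  set (n := Nat.max N1 N2).
  exists (u n), (q ^ n * r0). split; [apply Hinv|].
  pose proof (HN1 n (Nat.le_max_l _ _)).
  pose proof (HN2 n (Nat.le_max_r _ _)) as Hqn.
  apply (Rmult_lt_compat_r r0) in Hqn; [|exact Hr0].
  replace (eps / (2 * r0) * r0) with (eps / 2) in Hqn by (field; lra).
  lra.
Qed.

End Descent.

Section Action.

Context {X S : Type} (d : X -> X -> R) (mul : S -> S -> S) (act : S -> X -> X).
Hypothesis Hd : is_metric d.
Hypothesis Hact : semigroup_action mul act.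

Definition orbit_within (x y : X) (r : R) : Prop :=
  forall w, orbit act y w -> d x w <= r.

Lemma orbit_within_Dsup (x y : X) (r : R) :
  orbit_within x y r <-> Rbar_le (Dsup d x (orbit act y)) r.
Proof. symmetry. apply Dsup_le_iff. Qed.

Lemma orbit_self (y : X) : orbit act y y.
Proof. left. reflexivity. Qed.

Lemma orbit_S1_map_incl (f : X -> X) (s : S) (y w : X) :
  S1_map mul act f -> orbit act (f (act s y)) w -> orbit act y w.
Proof.
  destruct Hact as [_ Hcomp].
  intros Hf Hw. right.
  destruct Hf as [[t ->] | [_ ->]]; destruct Hw as [-> | [u ->]].
  - exists (mul t s). symmetry. apply Hcomp.
  - exists (mul u (mul t s)). rewrite !Hcomp. reflexivity.
  - exists s. reflexivity.
  - exists (mul u s). symmetry. apply Hcomp.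
Qed.

Lemma orbit_within_le (x y : X) (r r' : R) :
  r <= r' -> orbit_within x y r -> orbit_within x y r'.
Proof. intros Hr Hxy w Hw. specialize (Hxy w Hw). lra. Qed.

Lemma orbit_within_shift (x x' y : X) (r : R) :
  orbit_within x y r -> orbit_within x' y (d x' x + r).
Proof.
  intros Hxy w Hw. specialize (Hxy w Hw).
  pose proof (metric_triangle d Hd x' x w). lra.
Qed.

Lemma bounded_orbit_within (x : X) :
  bounded_set d (orbit act x) -> exists r, 0 < r /\ orbit_within x x r.
Proof.
  intros [c [M HM]].
  pose proof (HM x (orbit_self x)). pose proof (metric_nonneg d Hd c x).
  exists (2 * M + 1). split; [lra|].
  intros w Hw. specialize (HM w Hw).
  pose proof (metric_triangle d Hd x c w). rewrite (metric_sym d Hd x c) in *. lra.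
Qed.

Variable k : R.
Hypothesis Hyp : forall x y : X,
  Rbar_le (Dsup d x (orbit act y)) (Dsup d x (orbit act x)) ->
  forall s : S,
    Rbar_le
      (Rbar_glb (fun v => exists f, S1_map mul act f /\
                   v = Dsup d (act s x) (orbit act (f (act s y)))))
      (Rbar_mult (Finite k) (Dsup d x (orbit act y))).

Lemma orbit_within_step (x y : X) (r b : R) (s : S) :
  orbit_within x y r -> Rmax k 0 * r < b ->
  exists y', orbit_within x y' r /\ orbit_within (act s x) y' b.
Proof.
  intros Hxy Hb.
  (* The hypothesis needs D(x, o(y)) <= D(x, o(x)); if that fails, o(x) is
     itself within r of x and we use y := x instead. *)
  assert (Hnorm : exists y0, orbit_within x y0 r /\
            Rbar_le (Dsup d x (orbit act y0)) (Dsup d x (orbit act x))).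
  { destruct (classic (Rbar_le (Dsup d x (orbit act y)) (Dsup d x (orbit act x))))
      as [Hle | Hgt].
    - exists y. auto.
    - exists x. split; [|apply Rbar_le_refl].
      apply orbit_within_Dsup, Rbar_lt_le.
      apply (Rbar_lt_le_trans _ _ _ (Rbar_not_le_lt _ _ Hgt)).
      apply orbit_within_Dsup. exact Hxy. }
  destruct Hnorm as [y0 [Hxy0 Hle]].
  destruct (Dsup_finite d x y0 (orbit act y0) r (orbit_self y0) Hxy0)
    as [g [Hg [Hg0 Hgr]]].
  pose proof (metric_nonneg d Hd x y0).
  pose proof (Hyp x y0 Hle s) as Hglb. rewrite Hg in Hglb. simpl in Hglb.
  assert (Hkg : k * g < b).
  { pose proof (Rmax_l k 0). pose proof (Rmax_r k 0).
    assert (k * g <= Rmax k 0 * g) by (apply Rmult_le_compat_r; lra).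
    assert (Rmax k 0 * g <= Rmax k 0 * r) by (apply Rmult_le_compat_l; lra).
    lra. }
  destruct (Rbar_glb_lt_elem _ b (Rbar_le_lt_trans _ _ (Finite b) Hglb Hkg))
    as [v [[f [Hf ->]] Hv]].
  exists (f (act s y0)). split.
  - intros w Hw. exact (Hxy0 w (orbit_S1_map_incl f s y0 w Hf Hw)).
  - apply orbit_within_Dsup, Rbar_lt_le, Hv.
Qed.

Lemma displacement_le (x y : X) (r : R) (s : S) :
  orbit_within x y r -> d x (act s x) <= (1 + Rmax k 0) * r.
Proof.
  intros Hxy. apply Rle_plus_epsilon. intros eps Heps.
  destruct (orbit_within_step x y r (Rmax k 0 * r + eps) s Hxy ltac:(lra))
    as [y' [Hx Hsx]].
  pose proof (Hx y' (orbit_self y')). pose proof (Hsx y' (orbit_self y')).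
  pose proof (metric_triangle d Hd x y' (act s x)).
  rewrite (metric_sym d Hd y' (act s x)) in *. lra.
Qed.

Lemma orbit_within_contract (c : R) :
  c_regular d c -> Rmax k 0 < c ->
  exists q, 0 < q < 1 /\ forall x y r, 0 < r -> orbit_within x y r ->
    exists x' y', orbit_within x' y' (q * r) /\ d x x' <= 2 * r.
Proof.
  intros Hreg Hkc. pose proof (Rmax_r k 0).
  set (k' := (Rmax k 0 + c) / 2).
  destruct (Hreg k' ltac:(unfold k'; lra)) as [mu [alpha [Hmu [Halpha Hball]]]].
  exists (Rmax alpha (1 - mu)).
  pose proof (Rmax_l alpha (1 - mu)). pose proof (Rmax_r alpha (1 - mu)).
  split; [split; [lra | apply Rmax_lub_lt; lra]|].
  intros x y r Hr Hxy.
  assert (dxx : d x x = 0) by (apply (metric_eq0 d Hd); reflexivity).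
  destruct (classic (exists s, (1 - mu) * r <= d x (act s x))) as [[s Hs] | Hnone].
  - assert (Hb : Rmax k 0 * r < k' * ((1 + mu) * r)).
    { assert (Rmax k 0 * r < k' * r) by (apply Rmult_lt_compat_r; unfold k'; lra).
      assert (0 <= k' * (mu * r))
        by (apply Rmult_le_pos; [unfold k'; lra | nra]).
      nra. }
    destruct (orbit_within_step x y r _ s Hxy Hb) as [y' [Hx Hsx]].
    destruct (Hball x (act s x) r Hr Hs) as [z Hz].
    assert (Hzy' : orbit_within z y' (alpha * r)).
    { intros w Hw. apply Hz; unfold cball.
      - specialize (Hx w Hw). nra.
      - exact (Hsx w Hw). }
    exists z, y'. split.
    + apply (orbit_within_le z y' (alpha * r)); [nra | exact Hzy'].
    + pose proof (Hx y' (orbit_self y')). pose proof (Hzy' y' (orbit_self y')).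
      pose proof (metric_triangle d Hd x y' z).
      rewrite (metric_sym d Hd y' z) in *. nra.
  - exists x, x. split; [|lra].
    intros w [-> | [s ->]]; [nra|].
    assert (d x (act s x) < (1 - mu) * r)
      by (apply Rnot_le_lt; intros Hle; apply Hnone; eauto).
    nra.
Qed.

Lemma fixed_of_approx_orbits (l : X) (s : S) :
  (forall eps, 0 < eps -> exists x y r, orbit_within x y r /\ d x l + r < eps) ->
  act s l = l.
Proof.
  intros Happrox. pose proof (Rmax_r k 0).
  assert (Hsmall : d l (act s l) <= 0).
  { apply Rle_plus_epsilon. intros eps Heps.
    destruct (Happrox (eps / (1 + Rmax k 0))) as [x [y [r [Hxy Hr]]]].
    { apply Rdiv_lt_0_compat; lra. }
    pose proof (displacement_le l y _ s (orbit_within_shift x l y r Hxy)) as Hdisp.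
    rewrite (metric_sym d Hd l x) in Hdisp.
    apply (Rmult_lt_compat_l (1 + Rmax k 0)) in Hr; [|lra].
    replace ((1 + Rmax k 0) * (eps / (1 + Rmax k 0))) with eps in Hr by (field; lra).
    lra. }
  symmetry. apply (metric_eq0 d Hd).
  pose proof (metric_nonneg d Hd l (act s l)). lra.
Qed.

End Action.

Theorem theorem4p1 (X : Type) (d : X -> X -> R)
  (Hd : is_metric d) (Hcomplete : complete_metric d)
  (S : Type) (mul : S -> S -> S) (act : S -> X -> X)
  (Hact : semigroup_action mul act)
  (k : R) (Hk : Rbar_lt (Finite k) (lifschitz_char d))
  (Hyp : forall x y : X,
      Rbar_le (Dsup d x (orbit act y)) (Dsup d x (orbit act x)) ->
      forall s : S,
        Rbar_le
          (Rbar_glb (fun v => exists f, S1_map mul act f /\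
                       v = Dsup d (act s x) (orbit act (f (act s y)))))
          (Rbar_mult (Finite k) (Dsup d x (orbit act y)))) :
  (forall x : X, ~ bounded_set d (orbit act x)) \/
  (exists x : X, forall s : S, act s x = x).
Proof.
  destruct (classic (exists x0, bounded_set d (orbit act x0))) as [[x0 Hb] | Hnone];
    [right | left; intros x Hx; apply Hnone; exists x; exact Hx].
  destruct (bounded_orbit_within d act Hd x0 Hb) as [r0 [Hr0 Hx0]].
  destruct (lifschitz_char_gt_regular d k Hk) as [c [Hkc Hreg]].
  destruct (orbit_within_contract d mul act Hd Hact k Hyp c Hreg Hkc)
    as [q [Hq Hcontract]].
  set (P := fun x r => exists y, orbit_within d act x y r).
  assert (Hstep : forall x r, 0 < r -> P x r ->
                    exists x', P x' (q * r) /\ d x x' <= 2 * r).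
  { intros x r Hr [y Hxy].
    destruct (Hcontract x y r Hr Hxy) as [x' [y' [Hx'y' Hxx']]].
    exists x'. split; [exists y'|]; assumption. }
  destruct (descent_limit d Hd P q Hq Hstep x0 r0 Hcomplete Hr0 (ex_intro _ x0 Hx0))
    as [l Hl].
  exists l. intros s.
  apply (fixed_of_approx_orbits d mul act Hd Hact k Hyp l s).
  intros eps Heps. destruct (Hl eps Heps) as [x [r [[y Hxy] Hr]]]. eauto.
Qed.
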